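(* Let $T$ be a tree and let $v\in V(T)$. Then there exists a constant $C=C(T)$ with the following property. Let $H$ be a bipartite graph with parts $X$ and $Y$ such that $d(y)\ge C|X|^{1/2}$ for every $y\in Y$, and such that the number of triples $(y,x_1,x_2)\in Y\times X\times X$ of distinct vertices with $yx_1,yx_2\in E(H)$ is more than $C|X|^2$. Then $H$ contains a copy of $T[2]$ in which the two vertices corresponding to $v$ are embedded in $X$.
   Context: For a graph $F$, the $2$-blowup $F[2]$ is obtained by replacing each vertex $u$ of $F$ by an independent set of two vertices (the two images of $u$) and each edge by a copy of $K_{2,2}$ between the corresponding sets. $d(y)$ denotes the degree of $y$ in $H$. *)

From HB Require Import structures.
From mathcomp Require Import all_boot all_order all_algebra.
From mathcomp Require Export reals.
Set Implicit Arguments. Unset Strict Implicit. Unset Printing Implicit Defensive.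
Import Order.TTheory GRing.Theory Num.Theory.
Local Open Scope ring_scope.

Definition is_tree (T : finType) (e : rel T) : Prop :=
  [/\ symmetric e, irreflexive e,
      (forall x y : T, connect e x y) &
      (forall c : seq T, (2 < size c)%N -> ~~ ucycleb e c)].

Definition blowup2 (T : finType) (e : rel T) : rel (T * bool) :=
  fun p q => e p.1 q.1.

Definition bip_adj (X Y : finType) (adj : X -> Y -> bool) : rel (X + Y) :=
  fun p q => match p, q with
             | inl x, inr y => adj x y
             | inr y, inl x => adj x y
             | _, _ => false
             end.

Definition degY (X Y : finType) (adj : X -> Y -> bool) (y : Y) : nat :=
  #|[set x : X | adj x y]|.

Definition cherries (X Y : finType) (adj : X -> Y -> bool) : nat :=
  #|[set t : Y * X * X | [&& t.1.2 != t.2, adj t.1.2 t.1.1 & adj t.2 t.1.1]]|.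

Definition is_copy (V W : finType) (eF : rel V) (eH : rel W) (f : V -> W) : Prop :=
  injective f /\ (forall p q : V, eF p q -> eH (f p) (f q)).

From HB Require Import structures.
From mathcomp Require Import all_boot all_order all_algebra.
From mathcomp Require Import reals.
From mathcomp Require Import zify.
Import Order.TTheory GRing.Theory Num.Theory.
Set Implicit Arguments. Unset Strict Implicit. Unset Printing Implicit Defensive.

(* Pairs of distinct vertices of X and of Y form an auxiliary bipartite graph,
   two pairs being adjacent when they span a K_{2,2} of H.  A pair p of X with
   codegree c(p) has c(p)^2 - c(p) auxiliary neighbours, so Cauchy-Schwarz
   turns the two hypotheses into: the auxiliary graph has more than lam times
   as many edges as the total codegree of all pairs.  Pruning pairs whose
   auxiliary degree is below lam times their codegree then leaves a nonempty
   core.  At most 2|U|c(p) auxiliary neighbours of p meet a set U of vertices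
   of H, so inside the core every pair has a neighbour avoiding the at most
   2|T| vertices already used, and T[2] embeds greedily along the tree,
   starting with v at a pair of X. *)

Local Open Scope nat_scope.

Lemma sum_distinct_pairs (I : finType) (a : pred I) :
  \sum_i \sum_j [&& i != j, a i & a j] + \sum_i a i = (\sum_i a i) ^ 2.
Proof.
rewrite expnS expn1 big_distrl /= -big_split /=; apply: eq_bigr => i _.
rewrite big_distrr /= (bigD1 i) //= (bigD1 i (P := predT)) //= eqxx /=.
rewrite add0n addnC; congr (_ + _); first by case: (a i).
apply: eq_bigr => j /negbTE ji; rewrite eq_sym ji /=.
by case: (a i); case: (a j).
Qed.

Lemma sqr_sum_le_card_sum_sqr (I : finType) (f : I -> nat) :
  (\sum_i f i) ^ 2 <= #|I| * \sum_i f i ^ 2.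
Proof.
rewrite expnS expn1 big_distrlr /=.
have -> : #|I| * \sum_i f i ^ 2 = \sum_i \sum_(j : I) f i ^ 2.
  by rewrite big_distrr; apply: eq_bigr => i _; rewrite sum_nat_const.
rewrite -(leq_pmul2l (isT : 0 < 2)) [leqRHS]mul2n -addnn [X in _ <= _ + X]exchange_big.
rewrite -big_split big_distrr /=; apply: leq_sum => i _.
by rewrite -big_split big_distrr /=; apply: leq_sum => j _; exact: nat_Cauchy.
Qed.

Lemma card_sqr_le_sqr_sum (I : finType) (f : I -> nat) c :
  (forall i, c <= f i ^ 2) -> #|I| ^ 2 * c <= (\sum_i f i) ^ 2.
Proof.
move=> hf; rewrite -!mulnn big_distrlr -mulnA -!sum_nat_const.
apply: leq_sum => i _; apply: leq_sum => j _.
by rewrite -leq_sqr expnMn; apply: leq_trans (leq_mul (hf i) (hf j)); rewrite mulnn.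
Qed.

Lemma mul_le_of_sqr_le s a Q k :
  s ^ 2 <= a * (Q + s) -> k.+1 * a <= s -> k * s <= Q.
Proof.
move=> hs hk; have hks : k.+1 * a * s <= a * (Q + s).
  by apply: leq_trans hs; rewrite leq_mul2r hk orbT.
have [a0|a_gt0] := posnP a; first by move: hks; rewrite a0; nia.
by move: hks; rewrite mulnAC [_ * a]mulnC leq_pmul2l // mulSn addnC leq_add2r.
Qed.

Definition transp (A B : Type) (r : A -> B -> bool) : B -> A -> bool :=
  fun y x => r x y.

Section Codegrees.
Variables (A B : finType) (r : A -> B -> bool).

Definition common (p : A * A) (y : B) : bool := [&& p.1 != p.2, r p.1 y & r p.2 y].

Definition codeg (p : A * A) : nat := \sum_y common p y.

Definition k22 (p : A * A) (q : B * B) : bool :=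
  [&& q.1 != q.2, common p q.1 & common p q.2].

Lemma degYE y : degY r y = \sum_x r x y.
Proof. by rewrite /degY -sum1_card big_mkcond; apply: eq_bigr => x _; rewrite inE. Qed.

Lemma cherries_codeg : cherries r = \sum_p codeg p.
Proof.
rewrite /cherries -sum1_card big_mkcond /=.
rewrite (eq_bigr (fun t => common (t.1.2, t.2) t.1.1 : nat)); last by move=> t _; rewrite inE.
rewrite -(pair_bigA _ (fun (yx : B * A) x2 => common (yx.2, x2) yx.1 : nat)) /=.
rewrite -(pair_bigA _ (fun y x1 => \sum_x2 common (x1, x2) y : nat)) /=.
rewrite exchange_big /=; under eq_bigr do rewrite exchange_big /=.
by rewrite pair_bigA.
Qed.

Lemma cherries_add_edges :
  cherries r + \sum_y degY r y = \sum_y degY r y ^ 2.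
Proof.
under [RHS]eq_bigr do rewrite degYE -(sum_distinct_pairs (r^~ _)) pair_bigA.
under eq_bigr do rewrite degYE.
by rewrite big_split /= cherries_codeg exchange_big.
Qed.

Lemma sum_k22_codeg p : \sum_q k22 p q + codeg p = codeg p ^ 2.
Proof. by rewrite -sum_distinct_pairs pair_bigA. Qed.

Lemma sum_k22_cherries :
  \sum_p \sum_q k22 p q + cherries r = \sum_p codeg p ^ 2.
Proof.
rewrite cherries_codeg -big_split; apply: eq_bigr => p _; exact: sum_k22_codeg.
Qed.

Lemma codeg_gt0 p q : k22 p q -> 0 < codeg p.
Proof. by case/and3P=> _ hq _; rewrite /codeg (bigD1 q.1) //= hq. Qed.

Lemma sum_k22_hit p (U : {set B}) :
  \sum_q k22 p q * ((q.1 \in U) || (q.2 \in U)) <= 2 * #|U| * codeg p.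
Proof.
have card_sum : #|U| = \sum_(b : B) (b \in U) by rewrite -sum1_card big_mkcond.
apply: (@leq_trans (\sum_q ((q.1 \in U) * common p q.2 + (q.2 \in U) * common p q.1))).
  apply: leq_sum => q _; rewrite /k22.
  by case: (q.1 != q.2); case: common; case: common; case: (q.1 \in U); case: (q.2 \in U).
rewrite big_split /= -(pair_bigA _ (fun i j => (i \in U) * common p j)).
rewrite -(pair_bigA _ (fun i j => (j \in U) * common p i)) /= [X in _ + X]exchange_big /=.
rewrite addnn -mul2n -mulnA leq_pmul2l // card_sum big_distrl /=.
by apply: leq_sum => i _; rewrite -big_distrr.
Qed.

Lemma k22_avoid p (S : {set B * B}) (U : {set B}) :
  2 * #|U| * codeg p < \sum_(q in S) k22 p q ->
  exists q, [/\ q \in S, k22 p q, q.1 \notin U & q.2 \notin U].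
Proof.
move=> hlt.
have [/exists_inP[q qS /and3P[]]|] :=
  boolP [exists q in S, [&& k22 p q, q.1 \notin U & q.2 \notin U]]; first by exists q.
rewrite negb_exists_in => /forall_inP none.
suff: \sum_(q in S) k22 p q <= 2 * #|U| * codeg p by rewrite leqNgt hlt.
apply: leq_trans (sum_k22_hit p U); rewrite big_mkcond /=; apply: leq_sum => q _.
case: ifP => [/none|_] //; case: k22 => //=.
by case: (q.1 \in U); case: (q.2 \in U).
Qed.

End Codegrees.

Lemma k22_transp (A B : finType) (r : A -> B -> bool) p q :
  k22 (transp r) q p = k22 r p q.
Proof.
rewrite /k22 /common /transp; case: (p.1 != p.2); case: (q.1 != q.2);
  by case: (r p.1 q.1); case: (r p.1 q.2); case: (r p.2 q.1); case: (r p.2 q.2).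
Qed.

Lemma sum_degY_transp (A B : finType) (r : A -> B -> bool) :
  \sum_y degY r y = \sum_x degY (transp r) x.
Proof.
by under eq_bigr do rewrite degYE; under [RHS]eq_bigr do rewrite degYE; rewrite exchange_big.
Qed.

Section Counting.
Variables (X Y : finType) (adj : X -> Y -> bool) (K : nat).
Hypotheses (K_gt1 : 1 < K)
  (degY_large : forall y, K ^ 2 * #|X| <= degY adj y ^ 2)
  (cherries_large : K * #|X| ^ 2 < cherries adj).

Let edges := \sum_y degY adj y.
Let k22s := \sum_p \sum_q k22 adj p q.

Lemma cherries_add_edges_le : cherries adj + edges <= #|X| * edges.
Proof.
rewrite cherries_add_edges big_distrr /=; apply: leq_sum => y _.
by rewrite expnS expn1 leq_mul2r max_card orbT.
Qed.

Lemma sqr_edges_le : edges ^ 2 <= #|X| * (cherries (transp adj) + edges).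
Proof.
by rewrite /edges sum_degY_transp cherries_add_edges sqr_sum_le_card_sum_sqr.
Qed.

Lemma cherries_transp_large : K * #|Y| ^ 2 <= cherries (transp adj).
Proof.
have := card_sqr_le_sqr_sum degY_large; have := sqr_edges_le.
have := cherries_add_edges_le; move: cherries_large; rewrite -/edges.
move: (cherries adj) (cherries (transp adj)) edges #|X| #|Y| => Ch Ch' e n m hCh hCe he hm.
have n_gt0 : 0 < n by case: (posnP n) hCe hCh => // ->; nia.
(* [e >= K n >= 2 n] turns [he] into [e^2 <= 2 n Ch'], to be compared with [hm]. *)
have Kn_le_e : K * n <= e.
  by rewrite -(leq_pmul2l n_gt0); apply: ltnW; apply: leq_trans hCe; nia.
have : n * e ^ 2 <= n * (2 * n * Ch') by nia.
rewrite leq_pmul2l //; nia.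
Qed.

Lemma sqr_cherries_le : cherries adj ^ 2 <= #|X| ^ 2 * (k22s + cherries adj).
Proof.
rewrite /k22s sum_k22_cherries cherries_codeg -[#|X| ^ 2]mulnn -card_prod.
exact: sqr_sum_le_card_sum_sqr.
Qed.

Lemma sqr_cherries_transp_le :
  cherries (transp adj) ^ 2 <= #|Y| ^ 2 * (k22s + cherries (transp adj)).
Proof.
have -> : k22s = \sum_q \sum_p k22 (transp adj) q p.
  by rewrite /k22s exchange_big; under [RHS]eq_bigr do under eq_bigr do rewrite k22_transp.
rewrite sum_k22_cherries cherries_codeg -[#|Y| ^ 2]mulnn -card_prod.
exact: sqr_sum_le_card_sum_sqr.
Qed.

Lemma k22s_large lam :
  2 * lam + 2 <= K -> lam * (cherries adj + cherries (transp adj)) < k22s.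
Proof.
move=> hK; have K_le : forall a, (2 * lam + 1).+1 * a <= K * a.
  by move=> a; rewrite leq_mul2r; apply/orP; right; lia.
have hX : (2 * lam + 1) * cherries adj <= k22s.
  by apply: mul_le_of_sqr_le sqr_cherries_le _; apply: leq_trans (ltnW cherries_large).
have hY : (2 * lam + 1) * cherries (transp adj) <= k22s.
  by apply: mul_le_of_sqr_le sqr_cherries_transp_le _; apply: leq_trans cherries_transp_large.
have Ch_gt0 : 0 < cherries adj := leq_ltn_trans (leq0n _) cherries_large.
move: hX hY; rewrite mulnDr !mulnDl !mul1n; lia.
Qed.

End Counting.

Lemma sum_compl_setD1 (T : finType) (S : {set T}) i (g : T -> nat) :
  i \in S -> \sum_(k in ~: (S :\ i)) g k = g i + \sum_(k in ~: S) g k.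
Proof. by move=> iS; rewrite setCD setUC big_setU1 // inE iS. Qed.

Section DenseCore.
Variables (I J : finType) (G : I -> J -> bool) (wI : I -> nat) (wJ : J -> nat) (lam : nat).

Definition core_potential (S1 : {set I}) (S2 : {set J}) : nat :=
  \sum_(i in S1) \sum_(j in S2) G i j
  + lam * \sum_(i in ~: S1) wI i + lam * \sum_(j in ~: S2) wJ j.

Lemma core_potential_delI (S1 : {set I}) (S2 : {set J}) i : i \in S1 ->
  core_potential (S1 :\ i) S2 + \sum_(j in S2) G i j
  = core_potential S1 S2 + lam * wI i.
Proof.
move=> iS; rewrite /core_potential sum_compl_setD1 // (big_setD1 i iS) /=.
rewrite mulnDr; lia.
Qed.

Lemma core_potential_delJ (S1 : {set I}) (S2 : {set J}) j : j \in S2 ->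
  core_potential S1 (S2 :\ j) + \sum_(i in S1) G i j
  = core_potential S1 S2 + lam * wJ j.
Proof.
move=> jS; have swap (S : {set J}) :
  \sum_(i in S1) \sum_(j in S) G i j = \sum_(j in S) \sum_(i in S1) G i j.
  exact: exchange_big.
by rewrite /core_potential sum_compl_setD1 // !swap (big_setD1 j jS) /= mulnDr; lia.
Qed.

Lemma core_potential_full :
  core_potential setT setT = \sum_i \sum_j G i j.
Proof.
rewrite /core_potential !setCT !big_set0 !muln0 !addn0.
by apply: eq_big => [i|i _]; rewrite ?inE //; apply: eq_bigl => j; rewrite inE.
Qed.

Lemma sum_set_le (T : finType) (S : {set T}) (w : T -> nat) :
  \sum_(t in S) w t <= \sum_t w t.
Proof. by rewrite big_mkcond; apply: leq_sum => t _; case: ifP. Qed.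

Lemma dense_core :
  lam * (\sum_i wI i + \sum_j wJ j) < \sum_i \sum_j G i j ->
  exists (S1 : {set I}) (S2 : {set J}),
    [/\ exists i j, [/\ i \in S1, j \in S2 & G i j],
        forall i, i \in S1 -> lam * wI i <= \sum_(j in S2) G i j
      & forall j, j \in S2 -> lam * wJ j <= \sum_(i in S1) G i j].
Proof.
move=> dense.
(* Maximise the potential: deleting a vertex of too small degree would increase it. *)
have [[S1 S2] _ maxS] :=
  @arg_maxnP _ (setT, setT) xpredT (fun S => core_potential S.1 S.2) isT.
have {}maxS S1' S2' : core_potential S1' S2' <= core_potential S1 S2 := maxS (S1', S2') isT.
exists S1, S2; split.
- have [/existsP[i /existsP[j /and3P[]]]|] :=
    boolP [exists i, exists j, [&& i \in S1, j \in S2 & G i j]]; first by exists i, j.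
  rewrite negb_exists => /forallP none.
  have no_edge : \sum_(i in S1) \sum_(j in S2) G i j = 0.
    apply: big1 => i iS; apply: big1 => j jS.
    by move: (none i) => /existsPn/(_ j); rewrite iS jS; case: G.
  have := maxS setT setT; rewrite core_potential_full => /(leq_trans dense).
  rewrite /core_potential no_edge add0n -mulnDr ltn_mul2l => /andP[_].
  by rewrite ltnNge leq_add ?sum_set_le.
- move=> i iS; have := maxS (S1 :\ i) S2.
  by rewrite -(leq_add2r (\sum_(j in S2) G i j)) core_potential_delI // leq_add2l.
- move=> j jS; have := maxS S1 (S2 :\ j).
  by rewrite -(leq_add2r (\sum_(i in S1) G i j)) core_potential_delJ // leq_add2l.
Qed.

End DenseCore.

Section TreeEmbedding.
Variables (T : finType) (e : rel T) (v : T).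
Hypotheses (e_sym : symmetric e) (e_irr : irreflexive e)
  (e_conn : forall x y : T, connect e x y)
  (e_acyc : forall c : seq T, 2 < size c -> ~~ ucycleb e c).

Definition induced (S : {set T}) : rel T := [rel a b | [&& e a b, a \in S & b \in S]].

Lemma induced_sym S : symmetric (induced S).
Proof.
by move=> a b; rewrite /induced /= e_sym; case: (a \in S); case: (b \in S); rewrite ?andbF.
Qed.

Lemma exists_boundary_edge (S : {set T}) x z : x \in S -> z \notin S ->
  exists w u, [/\ w \in S, u \notin S & e w u].
Proof.
move=> xS zS; have [/existsP[w /existsP[u /and3P[]]]|no_exit] :=
  boolP [exists w, exists u, [&& w \in S, u \notin S & e w u]]; first by exists w, u.
have closedS : closed e (mem S).
  apply: intro_closed => [a b|a b eab aS]; first exact: sym_connect_sym.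
  by move: no_exit => /existsPn/(_ a)/existsPn/(_ b); rewrite aS eab andbT negbK.
by move: zS; rewrite -(closed_connect closedS (e_conn x z)) xS.
Qed.

Lemma induced_path_in (S : {set T}) x a p :
  path (induced S) x (a :: p) -> {subset x :: a :: p <= S}.
Proof.
elim: p x a => [|b p IHp] x a /=.
  by rewrite andbT => /and3P[_ xS aS] z; rewrite !inE => /orP[]/eqP->.
move=> /andP[/and3P[_ xS _] pS] z; rewrite inE => /orP[/eqP->//|]; exact: IHp pS z.
Qed.

Lemma unique_attachment (S : {set T}) u w y :
  connect (induced S) w y -> u \notin S -> e u w -> e u y -> y = w.
Proof.
move=> /connectP[p pS ->] uS euw euy; apply/eqP/negPn/negP => yw.
case: (shortenP pS) euy yw => [[|a q] qS uniq_q _] euy; first by rewrite eqxx.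
move=> _.
have u_notin : u \notin w :: a :: q by apply: contra uS => /(induced_path_in qS).
have /negP[] := e_acyc (c := [:: u, w, a & q]) isT.
apply/andP; split; last by rewrite cons_uniq u_notin uniq_q.
rewrite /= rcons_path /= euw [e _ u]e_sym -[last a q]/(last w (a :: q)) euy andbT.
by apply: sub_path qS => ? ? /and3P[].
Qed.

(* A block [b : B] hosts the two copies [img true b] and [img false b] of a
   vertex of T; linked blocks host adjacent vertices. *)
Variables (Z : finType) (B : Type) (img : bool -> B -> Z) (link : rel B) (b0 b1 : B).
Hypotheses (link_sym : symmetric link) (link01 : link b0 b1)
  (img_neq : forall b b', link b b' -> img true b != img false b)
  (link_avoid : forall b b', link b b' -> forall U : {set Z}, #|U| <= 2 * #|T| ->
     exists b2, [/\ link b b2, img true b2 \notin U & img false b2 \notin U]).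

Lemma img_inj b b' a c : link b b' -> img a b = img c b -> a = c.
Proof. by move/img_neq; case: a; case: c => // neq eq_img; rewrite eq_img ?eqxx in neq. Qed.

Record partial_copy (S : {set T}) (P : T -> B) : Prop := PartialCopy {
  root_in : v \in S;
  root_block : P v = b0;
  induced_connected : forall x, x \in S -> connect (induced S) v x;
  edges_linked : forall x y, x \in S -> y \in S -> e x y -> link (P x) (P y);
  block_linked : forall x, x \in S -> exists b, link (P x) b;
  copy_inj : forall x y a c, x \in S -> y \in S -> img a (P x) = img c (P y) -> x = y /\ a = c
}.

Lemma partial_copy_root : partial_copy [set v] (fun=> b0).
Proof.
split=> [||x|x y|x|x y a c]; rewrite ?inE //.
- by move=> /eqP->.
- by move=> /eqP-> /eqP->; rewrite e_irr.
- by move=> _; exists b1.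
- by move=> /eqP-> /eqP-> /(img_inj link01).
Qed.

Lemma partial_copy_add S P u w b :
  partial_copy S P -> u \notin S -> w \in S -> e w u -> link (P w) b ->
  (forall x a c, x \in S -> img a (P x) != img c b) ->
  partial_copy (u |: S) (fun x => if x == u then b else P x).
Proof.
move=> [vS Pv connS linkS openS injS] uS wS ewu Pw_b fresh.
set P' := fun x => _.
have P'S x : x \in S -> P' x = P x.
  by move=> xS; rewrite /P'; case: eqP => // xu; rewrite -xu xS in uS.
have P'u : P' u = b by rewrite /P' eqxx.
have attach y : y \in S -> e u y -> y = w.
  move=> yS; apply: unique_attachment uS _ => //; last by rewrite e_sym.
  apply: connect_trans (connS y yS).
  by rewrite (sym_connect_sym (induced_sym S)) connS.
have grow x : x \in S -> connect (induced (u |: S)) v x.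
  move/connS; apply: connect_sub => a c /and3P[eac aS cS].
  by apply: connect1; rewrite /induced /= eac !setU1r.
split.
- exact: setU1r.
- by rewrite P'S.
- move=> x /setU1P[->|/grow//]; apply: connect_trans (grow w wS) (connect1 _).
  by rewrite /induced /= ewu setU1r // setU11.
- move=> x y /setU1P[->|xS] /setU1P[->|yS] exy.
  + by rewrite e_irr in exy.
  + by rewrite P'u P'S // (attach y yS exy) link_sym.
  + by rewrite P'u P'S // (attach x xS) // e_sym.
  + by rewrite !P'S //; apply: linkS.
- move=> x /setU1P[->|xS]; first by rewrite P'u; exists (P w); rewrite link_sym.
  by rewrite P'S //; apply: openS.
- move=> x y a c /setU1P[->|xS] /setU1P[->|yS].
  + by rewrite P'u => /(img_inj (b' := P w)); rewrite link_sym => ->.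
  + by rewrite P'u P'S // => eq_img; move: (fresh y c a yS); rewrite eq_img eqxx.
  + by rewrite P'u P'S // => eq_img; move: (fresh x a c xS); rewrite eq_img eqxx.
  + by rewrite !P'S //; apply: injS.
Qed.

Lemma partial_copy_grow S P : partial_copy S P -> S != setT ->
  exists S' P', partial_copy S' P' /\ #|S| < #|S'|.
Proof.
move=> copyS; rewrite -subTset => /subsetPn[z _ zS].
have [w [u [wS uS ewu]]] := exists_boundary_edge (root_in copyS) zS.
have [b' Pw_b'] := block_linked copyS wS.
pose U := [set img t.2 (P t.1) | t in setX S [set: bool]].
have cardU : #|U| <= 2 * #|T|.
  apply: leq_trans (leq_imset_card _ _) _.
  by rewrite cardsX cardsT card_bool mulnC leq_mul2l max_card orbT.
have [b [Pw_b bU1 bU2]] := link_avoid Pw_b' cardU.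
exists (u |: S), (fun x => if x == u then b else P x); split; last by rewrite cardsU1 uS.
apply: (partial_copy_add (w := w)) => // x a c xS; apply: contraNneq (if c then bU1 else bU2).
by case: c => <-; apply/imsetP; exists (x, a) => //; rewrite inE /= xS in_setT.
Qed.

Lemma tree_copy : exists P : T -> B,
  [/\ P v = b0, forall x y, e x y -> link (P x) (P y)
     & injective (fun t : T * bool => img t.2 (P t.1))].
Proof.
suff [P copyT] : exists P, partial_copy setT P.
  exists P; split; first exact: root_block copyT.
    by move=> x y; apply: (edges_linked copyT); rewrite in_setT.
  move=> [x a] [y c] /= eq_img.
  by have [-> ->] := copy_inj copyT (in_setT x) (in_setT y) eq_img.
suff grow n S P : partial_copy S P -> #|T| - #|S| < n -> exists P', partial_copy setT P'.
  exact: grow _ _ _ partial_copy_root (ltnSn _).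
elim: n S P => // n IH S P copyS.
have [/eqP eqS _|neS] := boolP (S == setT); first by exists P; rewrite -eqS.
have [S' [P' [copyS' ltS]]] := partial_copy_grow copyS neS.
by move=> lt_n; apply: IH copyS' _; have := max_card S'; lia.
Qed.

End TreeEmbedding.

Lemma card_preimset_le (aT rT : finType) (f : aT -> rT) (U : {set rT}) :
  injective f -> #|f @^-1: U| <= #|U|.
Proof.
move=> f_inj; rewrite -(card_imset _ f_inj); apply/subset_leq_card/subsetP.
by move=> _ /imsetP[x + ->]; rewrite inE.
Qed.

Section K22Blocks.
Variables (X Y : finType) (adj : X -> Y -> bool) (N : nat).
Variables (S1 : {set X * X}) (S2 : {set Y * Y}).
Hypotheses
  (S1_dense : forall p, p \in S1 ->
     (2 * N + 1) * codeg adj p <= \sum_(q in S2) k22 adj p q)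
  (S2_dense : forall q, q \in S2 ->
     (2 * N + 1) * codeg (transp adj) q <= \sum_(p in S1) k22 adj p q).

Definition block_img (a : bool) (b : X * X + Y * Y) : X + Y :=
  match b with
  | inl p => inl (if a then p.1 else p.2)
  | inr q => inr (if a then q.1 else q.2)
  end.

Definition block_link (b b' : X * X + Y * Y) : bool :=
  match b, b' with
  | inl p, inr q | inr q, inl p => [&& p \in S1, q \in S2 & k22 adj p q]
  | _, _ => false
  end.

Lemma block_link_sym : symmetric block_link.
Proof. by case=> [?|?] []. Qed.

Lemma block_img_neq b b' : block_link b b' -> block_img true b != block_img false b.
Proof.
case: b b' => [p|q] [p'|q'] //= /and3P[_ _ /and3P[q_neq /and3P[p_neq _ _] _]].
  by apply: contra_neq p_neq => -[].
by apply: contra_neq q_neq => -[].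
Qed.

Lemma block_link_adj b b' a c :
  block_link b b' -> bip_adj adj (block_img a b) (block_img c b').
Proof.
by case: b b' => [p|q] [p'|q'] //= /and3P[_ _ /and3P[_ /and3P[_ ? ?] /and3P[_ ? ?]]];
  case: a; case: c.
Qed.

Lemma block_link_avoid b b' : block_link b b' -> forall U : {set X + Y}, #|U| <= N ->
  exists b2, [/\ block_link b b2, block_img true b2 \notin U & block_img false b2 \notin U].
Proof.
have few_used (Z : finType) (f : Z -> X + Y) (U : {set X + Y}) :
  injective f -> #|U| <= N -> forall c, 0 < c -> 2 * #|f @^-1: U| * c < (2 * N + 1) * c.
  move=> f_inj leU c c_gt0; rewrite ltn_mul2r c_gt0 addn1 ltnS leq_mul2l /=.
  exact: leq_trans (card_preimset_le U f_inj) leU.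
case: b b' => [p|q] [p'|q'] //= /and3P[pS qS k22pq] U leU.
- have [|q [qS2 k22q q1U q2U]] :=
    k22_avoid (r := adj) (p := p) (S := S2) (U := inr @^-1: U).
    exact: leq_trans (few_used _ _ _ (@inr_inj _ _) leU _ (codeg_gt0 k22pq)) (S1_dense pS).
  by exists (inr q); move: q1U q2U; rewrite !inE /= pS qS2 k22q.
- rewrite -k22_transp in k22pq.
  have [|p [pS1 k22p p1U p2U]] :=
    k22_avoid (r := transp adj) (p := q) (S := S1) (U := inl @^-1: U).
    apply: leq_trans (few_used _ _ _ (@inl_inj _ _) leU _ (codeg_gt0 k22pq)) _.
    by under eq_bigr do rewrite k22_transp; exact: S2_dense.
  by exists (inl p); move: p1U p2U; rewrite !inE /= pS1 qS -k22_transp k22p.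
Qed.

End K22Blocks.

Lemma sqr_le_of_mul_sqrt_le (R : rcfType) (K n d : nat) :
  (K%:R * Num.sqrt (n%:R : R) <= d%:R)%R -> K ^ 2 * n <= d ^ 2.
Proof.
move=> le_d; have ge0 : (0 <= K%:R * Num.sqrt (n%:R : R))%R by rewrite mulr_ge0 ?sqrtr_ge0.
have := ler_pM ge0 ge0 le_d le_d.
by rewrite -!expr2 exprMn sqr_sqrtr // -!natrX -natrM ler_nat.
Qed.

Local Open Scope ring_scope.

Theorem mainTheorem8 (R : realType) (T : finType) (e : rel T) (v : T) :
  is_tree e ->
  exists C : R,
    forall (X Y : finType) (adj : X -> Y -> bool),
      (forall y : Y, C * Num.sqrt (#|X|%:R) <= (degY adj y)%:R) ->
      C * (#|X|%:R) ^+ 2 < (cherries adj)%:R ->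
      exists f : T * bool -> X + Y,
        is_copy (blowup2 e) (bip_adj adj) f /\
        (forall a : bool, exists x : X, f (v, a) = inl x).
Proof.
case=> e_sym e_irr e_conn e_acyc.
(* A partial copy of T[2] uses at most [N] vertices of H, and [lam] = 2N + 1
   is the density needed by [block_link_avoid]. *)
pose N := (2 * #|T|)%N; pose lam := (2 * N + 1)%N; pose K := (2 * lam + 2)%N.
exists K%:R => X Y adj degY_ge cherries_gt.
have degY_large y : (K ^ 2 * #|X| <= degY adj y ^ 2)%N := sqr_le_of_mul_sqrt_le (degY_ge y).
have cherries_large : (K * #|X| ^ 2 < cherries adj)%N by rewrite -(ltr_nat R) natrM natrX.
have K_gt1 : (1 < K)%N by rewrite /K addn2.
have := k22s_large K_gt1 degY_large cherries_large (leqnn _); rewrite !cherries_codeg.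
case/dense_core=> S1 [S2 [[p0 [q0 [p0S1 q0S2 k22_0]]] S1_dense S2_dense]].
have link0 : block_link adj S1 S2 (inl p0) (inr q0) by rewrite /= p0S1 q0S2.
have [P [Pv P_link P_inj]] := tree_copy v e_sym e_irr e_conn e_acyc
  (block_link_sym adj S1 S2) link0 (@block_img_neq _ _ adj S1 S2)
  (block_link_avoid S1_dense S2_dense).
exists (fun t => block_img t.2 (P t.1)); split.
  by split=> // -[x a] [y c] /P_link /block_link_adj.
by move=> a; rewrite Pv; eexists.
Qed.
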